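(* Let $K\ge2$, $0<q<p$ with $p+(K-1)q=1$, $\phi\in\Delta$ with $\phi_1\le\cdots\le\phi_K$, and $n\in\{1,\dots,K-1\}$. If $\theta^{[n-1]}\in\Delta$, then $\theta^{[n]}\in\Delta$ and $D_{KL}(\phi,\mathcal{M}(\theta^{[n-1]}))\le D_{KL}(\phi,\mathcal{M}(\theta^{[n]}))$.
   Context: $\Delta=\{\theta\in\mathbb{R}^K:\theta_i\ge0,\sum_i\theta_i=1\}$. $\mathcal{M}(\theta)_y=q+(p-q)\theta_y$. $D_{KL}(\phi,\psi)=\sum_i\phi_i\log(\phi_i/\psi_i)$ with $0\log(0/\cdot)=0$. For sorted $\phi$ and $m\in\{0,\dots,K-1\}$: $\lambda^{[m]}=\frac{(p-q)\sum_{i>m}\phi_i}{1-mq}$, and $\theta^{[m]}_i=0$ for $i\le m$, $\theta^{[m]}_i=\frac{\phi_i}{\lambda^{[m]}}-\frac{q}{p-q}$ for $i>m$. *)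

(* R : realType, indices 'I_K (0-based; paper index i <-> ordinal i-1). *)
From HB Require Import structures.
From mathcomp Require Import all_boot all_order all_algebra.
From mathcomp Require Import reals exp.
Set Implicit Arguments. Unset Strict Implicit. Unset Printing Implicit Defensive.
Import Order.TTheory GRing.Theory Num.Theory.
Local Open Scope ring_scope.

Section Defs.
Variable R : realType.
Variable K : nat.

Definition in_simplex (th : 'I_K -> R) : Prop :=
  (forall i, 0 <= th i) /\ \sum_(i < K) th i = 1.

Definition Mch (p q : R) (th : 'I_K -> R) : 'I_K -> R :=
  fun y => q + (p - q) * th y.

Definition DKL (phi psi : 'I_K -> R) : R :=
  \sum_(i < K) (if phi i == 0 then 0 else phi i * ln (phi i / psi i)).

(* lambda^[m] = (p-q) sum_{i>m} phi_i / (1 - m q)   (1-based i > m  <=>  0-based i >= m) *)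
Definition lambda_m (p q : R) (phi : 'I_K -> R) (m : nat) : R :=
  (p - q) * (\sum_(i < K | (m <= i)%N) phi i) / (1 - m%:R * q).

Definition theta_m (p q : R) (phi : 'I_K -> R) (m : nat) : 'I_K -> R :=
  fun i => if (i < m)%N then 0 else phi i / lambda_m p q phi m - q / (p - q).

End Defs.

(* On the coordinates i >= m the model M(theta^[m]) is proportional to phi, with
   total mass 1 - m q, and it equals q below m.  Hence
     D_KL(phi, M(theta^[m])) = sum_{i<m} phi_i ln(phi_i/q) + S_m ln(S_m/(1 - m q)),
   where S_m is the tail mass of phi from m on.  Passing from m to m + 1 splits
   S_m = phi_m + S_{m+1} and 1 - m q = q + (1 - (m+1) q), so the divergence can
   only grow by the two-term log-sum inequality.  Nonnegativity of theta^[m] at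
   the coordinate m reads q S_{m+1} <= phi_m (1 - (m+1) q), which by the
   monotonicity of phi is nonnegativity of theta^[m+1] everywhere. *)
From HB Require Import structures.
From mathcomp Require Import all_boot all_order all_algebra.
From mathcomp Require Import reals exp.
From mathcomp Require Import ring lra zify.
Set Implicit Arguments.
Unset Strict Implicit.
Unset Printing Implicit Defensive.
Import Order.TTheory GRing.Theory Num.Theory.
Local Open Scope ring_scope.

Section LogSum.
Variable R : realType.

Lemma sub_le_mul_ln_div (x y : R) :
  0 < x -> 0 < y -> x - y <= x * ln (x / y).
Proof.
move=> x0 y0.
have : ln (y / x) <= y / x - 1.
  have := @le_ln1Dx _ (y / x - 1); rewrite addrCA subrr addr0; apply.
  by rewrite ltrBrDl subrr divr_gt0.
rewrite -invf_div lnV; last by rewrite posrE divr_gt0.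
move=> /(ler_wpM2l (ltW x0)).
rewrite invf_div mulrBr mulr1 mulrCA divff ?gt_eqF // mulr1.
lra.
Qed.

Lemma log_sum_le2 (a b c d : R) :
  0 < a -> 0 < b -> 0 < c -> 0 < d ->
  (a + b) * ln ((a + b) / (c + d)) <= a * ln (a / c) + b * ln (b / d).
Proof.
move=> a0 b0 c0 d0.
set r := (a + b) / (c + d).
have r0 : 0 < r by rewrite divr_gt0 ?addr_gt0.
have lnE (x y : R) : 0 < x -> 0 < y -> ln (x / (y * r)) = ln (x / y) - ln r.
  move=> x0 y0; rewrite -ln_div ?posrE ?r0 ?divr_gt0 //.
  by rewrite invfM mulrA.
have := sub_le_mul_ln_div a0 (mulr_gt0 c0 r0); rewrite lnE //.
have := sub_le_mul_ln_div b0 (mulr_gt0 d0 r0); rewrite lnE //.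
have rE : c * r + d * r = a + b by rewrite -mulrDl mulrC divfK ?gt_eqF ?addr_gt0.
lra.
Qed.

Definition kl_term (x y : R) : R := if x == 0 then 0 else x * ln (x / y).

End LogSum.

Section Theta.
Variables (R : realType) (K : nat) (p q : R) (phi : 'I_K -> R).

Definition tail_mass (m : nat) : R := \sum_(i < K | (m <= i)%N) phi i.

Lemma tail_mass_split (i : 'I_K) : tail_mass i = phi i + tail_mass i.+1.
Proof.
rewrite /tail_mass (bigD1 i) //=; congr (_ + _); apply: eq_bigl => j.
by rewrite -(inj_eq val_inj) /=; lia.
Qed.

Lemma Mch_theta_m_lt m (i : 'I_K) :
  (i < m)%N -> Mch p q (theta_m p q phi m) i = q.
Proof. by move=> im; rewrite /Mch /theta_m im mulr0 addr0. Qed.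

(* No positivity is needed: when S_m = 0 or 1 - m q = 0 both sides are 0. *)
Lemma Mch_theta_m_ge m (i : 'I_K) : p != q -> (m <= i)%N ->
  Mch p q (theta_m p q phi m) i = phi i * (1 - m%:R * q) / tail_mass m.
Proof.
rewrite -subr_eq0 => pq mi; rewrite /Mch /theta_m ltnNge mi /= /lambda_m.
rewrite mulrBr [(p - q) * (q / _)]mulrCA divff // mulr1 addrCA subrr addr0.
by rewrite -/(tail_mass m) !invfM invrK mulrCA !mulrA mulfK // mulrAC.
Qed.

Lemma DKL_Mch_theta_m m : p != q ->
  DKL phi (Mch p q (theta_m p q phi m)) =
  \sum_(i < K | (i < m)%N) kl_term (phi i) q
    + tail_mass m * ln (tail_mass m / (1 - m%:R * q)).
Proof.
move=> pq; rewrite /DKL (bigID (fun i : 'I_K => (i < m)%N)) /=; congr (_ + _).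
  by apply: eq_bigr => i im; rewrite Mch_theta_m_lt.
rewrite /tail_mass mulr_suml; apply: eq_big => [i | i]; first by rewrite -leqNgt.
rewrite -leqNgt => mi; rewrite Mch_theta_m_ge //.
case: eqP => [->|/eqP phi0]; first by rewrite mul0r.
by rewrite -/(tail_mass m) !invfM invrK !mulrA divff // mul1r [_^-1 * _]mulrC.
Qed.

Lemma sum_theta_m m : (m < K)%N -> p != q -> p + (K - 1)%:R * q = 1 ->
  tail_mass m != 0 -> 1 - m%:R * q != 0 ->
  \sum_(i < K) theta_m p q phi m i = 1.
Proof.
move=> mK pq pq1 S0 D0.
rewrite (eq_bigr (fun i : 'I_K => if (m <= i)%N then
            phi i / lambda_m p q phi m - q / (p - q) else 0)); last first.
  by move=> i _; rewrite /theta_m; case: ltnP.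
rewrite -big_mkcond /= sumrB -mulr_suml.
have ->: \sum_(i < K | (m <= i)%N) q / (p - q) = q / (p - q) *+ (K - m).
  by rewrite -sumr_const_nat big_geq_mkord.
have K1 : (1 <= K)%N by lia.
rewrite -mulr_natr natrB 1?ltnW // /lambda_m -/(tail_mass m).
rewrite natrB // in pq1.
have pE : p = 1 - (K%:R - 1) * q by lra.
rewrite pE in pq *; rewrite -subr_eq0 in pq.
by field; rewrite S0 pq D0.
Qed.

Lemma theta_m_ge0E m (i : 'I_K) : q < p -> 0 < tail_mass m -> (m <= i)%N ->
  (0 <= theta_m p q phi m i) = (q * tail_mass m <= phi i * (1 - m%:R * q)).
Proof.
move=> qp S0 mi.
have pq : p - q != 0 by rewrite subr_eq0 gt_eqF.
have ->: theta_m p q phi m i = (Mch p q (theta_m p q phi m) i - q) / (p - q).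
  by rewrite /Mch addrAC subrr add0r mulrAC divff // mul1r.
rewrite Mch_theta_m_ge ?gt_eqF // pmulr_lge0 ?invr_gt0 ?subr_gt0 //.
by rewrite subr_ge0 ler_pdivlMr // mulrC.
Qed.

Hypothesis phi_simplex : in_simplex phi.
Hypothesis phi_sorted : forall i j : 'I_K, (i <= j)%N -> phi i <= phi j.

(* The largest weight of a distribution on K points is at least 1/K. *)
Lemma tail_mass_gt0 m : (m < K)%N -> 0 < tail_mass m.
Proof.
move=> mK; have lK : (K.-1 < K)%N by lia.
have phil : 0 < phi (Ordinal lK).
  rewrite ltNge; apply/negP => le0; have [_ sum1] := phi_simplex.
  have : \sum_(i < K) phi i <= \sum_(i < K) phi (Ordinal lK).
    by apply: ler_sum => i _; apply: phi_sorted => /=; have := ltn_ord i; lia.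
  rewrite sumr_const card_ord sum1 -mulr_natr.
  have : (0 : R) <= K%:R by rewrite ler0n.
  nra.
apply: (lt_le_trans phil); rewrite /tail_mass (bigD1 (Ordinal lK)) /=; last by lia.
rewrite lerDl sumr_ge0 // => i _; exact: phi_simplex.1.
Qed.

Hypotheses (q_gt0 : 0 < q) (q_lt_p : q < p) (pq1 : p + (K - 1)%:R * q = 1).

Lemma q_lt_one_sub m : (m < K)%N -> q < 1 - m%:R * q.
Proof.
move=> mK; apply: (lt_le_trans q_lt_p).
rewrite lerBrDr -[X in _ <= X]pq1 lerD2l ler_wpM2r ?(ltW q_gt0) // ler_nat.
lia.
Qed.

Lemma tail_mass_succ_le (j : 'I_K) : (j.+1 < K)%N ->
  in_simplex (theta_m p q phi j) ->
  q * tail_mass j.+1 <= phi j * (1 - j.+1%:R * q).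
Proof.
move=> jK [theta_ge0 _]; have := theta_ge0 j.
rewrite theta_m_ge0E ?tail_mass_gt0 // tail_mass_split -natr1.
lra.
Qed.

Lemma theta_m_succ_in_simplex (j : 'I_K) : (j.+1 < K)%N ->
  in_simplex (theta_m p q phi j) -> in_simplex (theta_m p q phi j.+1).
Proof.
move=> jK theta_j; have mass_le := tail_mass_succ_le jK theta_j.
have S0 := tail_mass_gt0 jK; have D0 := q_lt_one_sub jK.
split; last first.
  by apply: sum_theta_m; rewrite ?gt_eqF // (lt_trans q_gt0 D0).
move=> i; case: (ltnP i j.+1) => ji; first by rewrite /theta_m ji.
rewrite theta_m_ge0E //.
apply: (le_trans mass_le); rewrite ler_wpM2r ?(ltW (lt_trans q_gt0 D0)) //.
by apply: phi_sorted; lia.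
Qed.

Lemma DKL_Mch_theta_m_succ (j : 'I_K) : (j.+1 < K)%N ->
  in_simplex (theta_m p q phi j) ->
  DKL phi (Mch p q (theta_m p q phi j)) <= DKL phi (Mch p q (theta_m p q phi j.+1)).
Proof.
move=> jK theta_j; have mass_le := tail_mass_succ_le jK theta_j.
have S0 := tail_mass_gt0 jK; have D0 := q_lt_one_sub jK.
have phij : 0 < phi j.
  rewrite -(pmulr_lgt0 _ (lt_trans q_gt0 D0)).
  exact: lt_le_trans (mulr_gt0 q_gt0 S0) mass_le.
have pq : p != q by rewrite gt_eqF.
rewrite !DKL_Mch_theta_m // tail_mass_split.
have ->: \sum_(i < K | (i < j.+1)%N) kl_term (phi i) q =
         kl_term (phi j) q + \sum_(i < K | (i < j)%N) kl_term (phi i) q.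
  rewrite (bigD1 j) //=; congr (_ + _); apply: eq_bigl => i.
  by rewrite -(inj_eq val_inj) /=; lia.
rewrite [X in _ <= X]addrAC [X in _ <= X]addrC lerD2l /kl_term gt_eqF //.
have ->: 1 - j%:R * q = q + (1 - j.+1%:R * q) by rewrite -natr1; ring.
exact: log_sum_le2 phij S0 q_gt0 (lt_trans q_gt0 D0).
Qed.

End Theta.

Theorem lemma4 (R : realType) (K : nat) (p q : R) (phi : 'I_K -> R) (n : nat) :
  (2 <= K)%N ->
  0 < q -> q < p -> p + (K - 1)%:R * q = 1 ->
  in_simplex phi ->
  (forall i j : 'I_K, (i <= j)%N -> phi i <= phi j) ->
  (1 <= n)%N -> (n <= K - 1)%N ->
  in_simplex (theta_m p q phi n.-1) ->
  in_simplex (theta_m p q phi n) /\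
  DKL phi (Mch p q (theta_m p q phi n.-1)) <= DKL phi (Mch p q (theta_m p q phi n)).
Proof.
move=> _ q0 qp pq1 phi_simplex phi_sorted.
case: n => [//|m] _ mK theta_simplex /=.
have m_lt_K : (m < K)%N by lia.
pose j : 'I_K := Ordinal m_lt_K.
have jK : (j.+1 < K)%N by rewrite /=; lia.
split.
- exact: (theta_m_succ_in_simplex phi_simplex phi_sorted q0 qp pq1 jK theta_simplex).
- exact: (DKL_Mch_theta_m_succ phi_simplex phi_sorted q0 qp pq1 jK theta_simplex).
Qed.
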